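(* Let $\bar{\mathcal{X}}=(\mathcal{G},\mathbf{U}_1,\mathbf{U}_2,\mathbf{U}_3)\in\mathcal{M}_r$ and $\eta=(\eta_{\mathcal{G}},\eta_1,\eta_2,\eta_3)\in T_{\bar{\mathcal{X}}}\mathcal{M}_r$. The linear system in skew-symmetric unknowns $\mathbf{\Omega}_i\in\mathbb{R}^{r_i\times r_i}$ ($\mathbf{\Omega}_i^\top=-\mathbf{\Omega}_i$), $i=1,2,3$, $$\mathrm{skw}(\mathbf{V}_i^\top\mathbf{V}_i\mathbf{\Omega}_i\mathbf{G}_i)+\mathrm{skw}(\mathbf{G}_i\mathbf{\Omega}_i)+\mathrm{skw}(\mathbf{W}_i^\top\mathbf{W}_i\mathbf{\Omega}_i\mathbf{G}_{\alpha_i})-\mathcal{G}_{(i)}\big(\mathbf{I}_{r_{j_i}}\otimes\mathbf{\Omega}_{k_i}+\mathbf{\Omega}_{j_i}\otimes\mathbf{I}_{r_{k_i}}\big)\mathcal{G}_{(i)}^\top=\mathrm{skw}\big(\mathbf{V}_i^\top\eta_i\mathbf{G}_i+\mathbf{W}_i^\top\eta_i\mathbf{G}_{\alpha_i}+\mathcal{G}_{(i)}(\eta_{\mathcal{G}})_{(i)}^\top\big),\quad i=1,2,3,$$ has a unique solution $(\mathbf{\Omega}_1,\mathbf{\Omega}_2,\mathbf{\Omega}_3)$, and the orthogonal projection (with respect to $\langle\cdot,\cdot\rangle_{\bar{\mathcal{X}}}$) of $\eta$ onto the horizontal space $\mathcal{H}_{\bar{\mathcal{X}}}$ is $$\Pi_{\bar{\mathcal{X}}}(\eta)=\Big(\eta_{\mathcal{G}}+\sum_{i=1}^3\mathcal{G}\times_i\mathbf{\Omega}_i,\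 \eta_1-\mathbf{U}_1\mathbf{\Omega}_1,\ \eta_2-\mathbf{U}_2\mathbf{\Omega}_2,\ \eta_3-\mathbf{U}_3\mathbf{\Omega}_3\Big).$$
   Context: Fix $1\le r_i\le n_i$, $k_i\ge r_i$, $N=n_1n_2n_3$, $\alpha_i>0$, $\mathbf{P}_i\in\mathbb{R}^{n_i\times k_i}$ with orthonormal columns. $\mathcal{X}_{(i)}$ is the mode-$i$ matricization and $\times_i$ the mode-$i$ product, with the convention $(\mathcal{G}\times_1\mathbf{A}_1\times_2\mathbf{A}_2\times_3\mathbf{A}_3)_{(i)}=\mathbf{A}_i\mathcal{G}_{(i)}(\mathbf{A}_{j_i}\otimes\mathbf{A}_{k_i})^\top$, where $j_i=\max(\{1,2,3\}\setminus\{i\})$, $k_i=\min(\{1,2,3\}\setminus\{i\})$, and $\otimes$ is the Kronecker product. Total space $\mathcal{M}_r=\{(\mathcal{G},\mathbf{U}_1,\mathbf{U}_2,\mathbf{U}_3):\mathcal{G}\in\mathbb{R}^{r_1\times r_2\times r_3},\ \mathrm{rank}\,\mathcal{G}_{(i)}=r_i,\ \mathbf{U}_i^\top\mathbf{U}_i=\mathbf{I}_{r_i}\}$, tangent space $T_{\bar{\mathcal{X}}}\mathcal{M}_r=\{(\eta_{\mathcal{G}},\eta_1,\eta_2,\eta_3):\mathbf{U}_i^\top\eta_i+\eta_i^\top\mathbf{U}_i=0\}$. Metric: $\langle\eta,\xi\rangle_{\bar{\mathcal{X}}}=\sum_i\langle\eta_i,\xi_i\mathcal{G}_{(i)}\mathcal{G}_{(i)}^\top\rangle+\langle\eta_{\mathcal{G}},\xi_{\mathcal{G}}\rangle+\sum_iN\alpha_i\langle\eta_i,(\mathbf{I}-\mathbf{P}_i\mathbf{P}_i^\top)\xi_i\rangle$.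 Vertical space $\mathcal{V}_{\bar{\mathcal{X}}}=\{(-\sum_{i=1}^3\mathcal{G}\times_i\mathbf{\Omega}_i,\mathbf{U}_1\mathbf{\Omega}_1,\mathbf{U}_2\mathbf{\Omega}_2,\mathbf{U}_3\mathbf{\Omega}_3):\mathbf{\Omega}_i^\top=-\mathbf{\Omega}_i\}$; horizontal space $\mathcal{H}_{\bar{\mathcal{X}}}$ = orthogonal complement of $\mathcal{V}_{\bar{\mathcal{X}}}$ in $T_{\bar{\mathcal{X}}}\mathcal{M}_r$ w.r.t. the metric. Notation: $\mathbf{V}_i=\mathbf{P}_i\mathbf{P}_i^\top\mathbf{U}_i$, $\mathbf{W}_i=\mathbf{U}_i-\mathbf{V}_i$, $\mathbf{G}_i=\mathcal{G}_{(i)}\mathcal{G}_{(i)}^\top$, $\mathbf{G}_{\alpha_i}=N\alpha_i\mathbf{I}+\mathcal{G}_{(i)}\mathcal{G}_{(i)}^\top$, $\mathrm{skw}(\mathbf{A})=(\mathbf{A}-\mathbf{A}^\top)/2$. *)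

From HB Require Import structures.
From mathcomp Require Import all_boot all_order all_algebra.
Set Implicit Arguments. Unset Strict Implicit. Unset Printing Implicit Defensive.
Import Order.TTheory GRing.Theory Num.Theory.
Local Open Scope ring_scope.

Definition tensor (R : Type) (a b c : nat) := {ffun 'I_a * 'I_b * 'I_c -> R}.

(* Decoding of a Kronecker index k : 'I_(m*n) into a pair (i, j)
   (the encoding used by mathcomp's mxvec_index). *)
Definition kidx (m n : nat) (k : 'I_(m * n)) : 'I_m * 'I_n :=
  enum_val (cast_ord (esym (mxvec_cast m n)) k).

Definition kron (R : pzRingType) (m1 n1 m2 n2 : nat)
  (A : 'M[R]_(m1, n1)) (B : 'M[R]_(m2, n2)) : 'M[R]_(m1 * m2, n1 * n2) :=
  \matrix_(p, q) (A (kidx p).1 (kidx q).1 * B (kidx p).2 (kidx q).2).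

Section Tensors.
Variable R : pzRingType.
Variables a b c : nat.

(* Mode-i matricizations, with the convention
   (G x1 A1 x2 A2 x3 A3)_(i) = A_i G_(i) (A_{j_i} (x) A_{k_i})^T,
   j_i = max({1,2,3}\{i}), k_i = min({1,2,3}\{i}):
   columns of G_(1) are indexed by (i3,i2), of G_(2) by (i3,i1),
   of G_(3) by (i2,i1). *)
Definition unf1 (G : tensor R a b c) : 'M[R]_(a, c * b) :=
  \matrix_(i, q) G (i, (kidx q).2, (kidx q).1).
Definition unf2 (G : tensor R a b c) : 'M[R]_(b, c * a) :=
  \matrix_(j, q) G ((kidx q).2, j, (kidx q).1).
Definition unf3 (G : tensor R a b c) : 'M[R]_(c, b * a) :=
  \matrix_(k, q) G ((kidx q).2, (kidx q).1, k).

Definition mprod1 (G : tensor R a b c) (A : 'M[R]_a) : tensor R a b c :=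
  [ffun t => let: (i, j, k) := t in \sum_(l < a) A i l * G (l, j, k)].
Definition mprod2 (G : tensor R a b c) (A : 'M[R]_b) : tensor R a b c :=
  [ffun t => let: (i, j, k) := t in \sum_(l < b) A j l * G (i, l, k)].
Definition mprod3 (G : tensor R a b c) (A : 'M[R]_c) : tensor R a b c :=
  [ffun t => let: (i, j, k) := t in \sum_(l < c) A k l * G (i, j, l)].

Definition frob (m n : nat) (A B : 'M[R]_(m, n)) : R := \tr (A^T *m B).
Definition tfrob (X Y : tensor R a b c) : R := \sum_t X t * Y t.
End Tensors.

Definition skewsym (R : pzRingType) (n : nat) (A : 'M[R]_n) : Prop := A^T = - A.

Definition skw (R : fieldType) (n : nat) (A : 'M[R]_n) : 'M[R]_n :=
  (2%:R)^-1 *: (A - A^T).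

Record quad (R : Type) (n1 n2 n3 r1 r2 r3 : nat) := Quad {
  qG : tensor R r1 r2 r3;
  q1 : 'M[R]_(n1, r1);
  q2 : 'M[R]_(n2, r2);
  q3 : 'M[R]_(n3, r3) }.

Section Manifold.
Variable R : realFieldType.
Variables n1 n2 n3 r1 r2 r3 k1 k2 k3 : nat.
Local Notation quad := (quad R n1 n2 n3 r1 r2 r3).

Definition qsub (x y : quad) : quad :=
  Quad (qG x - qG y) (q1 x - q1 y) (q2 x - q2 y) (q3 x - q3 y).

Definition in_Mr (X : quad) : Prop :=
  [/\ \rank (unf1 (qG X)) = r1, \rank (unf2 (qG X)) = r2
    & \rank (unf3 (qG X)) = r3] /\
  [/\ (q1 X)^T *m q1 X = 1%:M, (q2 X)^T *m q2 X = 1%:M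
    & (q3 X)^T *m q3 X = 1%:M].

Definition tangent (X eta : quad) : Prop :=
  [/\ (q1 X)^T *m q1 eta + (q1 eta)^T *m q1 X = 0,
      (q2 X)^T *m q2 eta + (q2 eta)^T *m q2 X = 0
    & (q3 X)^T *m q3 eta + (q3 eta)^T *m q3 X = 0].

Variables (P1 : 'M[R]_(n1, k1)) (P2 : 'M[R]_(n2, k2)) (P3 : 'M[R]_(n3, k3)).
Variables (alpha1 alpha2 alpha3 : R).

Definition NN : R := (n1 * n2 * n3)%:R.

Definition metric (X eta xi : quad) : R :=
  let G := qG X in
  frob (q1 eta) (q1 xi *m (unf1 G *m (unf1 G)^T))
  + frob (q2 eta) (q2 xi *m (unf2 G *m (unf2 G)^T))
  + frob (q3 eta) (q3 xi *m (unf3 G *m (unf3 G)^T))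
  + tfrob (qG eta) (qG xi)
  + NN * alpha1 * frob (q1 eta) ((1%:M - P1 *m P1^T) *m q1 xi)
  + NN * alpha2 * frob (q2 eta) ((1%:M - P2 *m P2^T) *m q2 xi)
  + NN * alpha3 * frob (q3 eta) ((1%:M - P3 *m P3^T) *m q3 xi).

Definition vertical (X v : quad) : Prop :=
  exists (O1 : 'M[R]_r1) (O2 : 'M[R]_r2) (O3 : 'M[R]_r3),
    [/\ skewsym O1, skewsym O2, skewsym O3 &
    v = Quad (- (mprod1 (qG X) O1 + mprod2 (qG X) O2 + mprod3 (qG X) O3))
             (q1 X *m O1) (q2 X *m O2) (q3 X *m O3)].

Definition horizontal (X h : quad) : Prop :=
  tangent X h /\ forall v, vertical X v -> metric X h v = 0.

Definition is_horiz_proj (X eta h : quad) : Prop :=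
  horizontal X h /\ forall xi, horizontal X xi -> metric X (qsub eta h) xi = 0.
End Manifold.

(* The i-th equation of the linear system, written for a generic mode:
   Gi = G_(i), U = U_i, P = P_i, Na = N alpha_i, Om = Omega_i,
   K = I_{r_{j_i}} (x) Omega_{k_i} + Omega_{j_i} (x) I_{r_{k_i}},
   eta = eta_i, EG = (eta_G)_(i). *)
Definition mode_eq (R : realFieldType) (n r k m : nat)
  (Gi : 'M[R]_(r, m)) (U : 'M[R]_(n, r)) (P : 'M[R]_(n, k)) (Na : R)
  (Om : 'M[R]_r) (K : 'M[R]_m) (eta : 'M[R]_(n, r)) (EG : 'M[R]_(r, m)) : Prop :=
  let V := P *m P^T *m U in
  let W := U - V in
  let Gs := Gi *m Gi^T in
  let Ga := Na%:M + Gs in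
  skw (V^T *m V *m Om *m Gs) + skw (Gs *m Om) + skw (W^T *m W *m Om *m Ga)
    - Gi *m K *m Gi^T
  = skw (V^T *m eta *m Gs + W^T *m eta *m Ga + Gi *m EG^T).

Definition horiz_system (R : realFieldType) (n1 n2 n3 r1 r2 r3 k1 k2 k3 : nat)
  (P1 : 'M[R]_(n1, k1)) (P2 : 'M[R]_(n2, k2)) (P3 : 'M[R]_(n3, k3))
  (alpha1 alpha2 alpha3 : R) (X eta : quad R n1 n2 n3 r1 r2 r3)
  (O1 : 'M[R]_r1) (O2 : 'M[R]_r2) (O3 : 'M[R]_r3) : Prop :=
  let N := NN R n1 n2 n3 in
  let G := qG X in
  [/\ mode_eq (unf1 G) (q1 X) P1 (N * alpha1) O1
        (kron (1%:M : 'M[R]_r3) O2 + kron O3 (1%:M : 'M[R]_r2))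
        (q1 eta) (unf1 (qG eta)),
      mode_eq (unf2 G) (q2 X) P2 (N * alpha2) O2
        (kron (1%:M : 'M[R]_r3) O1 + kron O3 (1%:M : 'M[R]_r1))
        (q2 eta) (unf2 (qG eta))
    & mode_eq (unf3 G) (q3 X) P3 (N * alpha3) O3
        (kron (1%:M : 'M[R]_r2) O1 + kron O2 (1%:M : 'M[R]_r1))
        (q3 eta) (unf3 (qG eta))].

(* Vertical vectors are the images vert(O) = (-sum_i G x_i O_i, U_i O_i) of skew triples O, so the
   horizontal projection of eta is eta - vert(O) for the O satisfying the normal equations
   <eta - vert(O), vert(T)> = 0 for every skew T.  Expanding the metric mode by mode gives
   <vert(O), vert(T)> = sum_i <L_i(O), T_i> and <eta, vert(T)> = sum_i <R_i(eta), T_i>, where L_i and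
   R_i are the (skew-symmetric) two sides of the i-th equation of the system, so the normal
   equations are exactly that system.  The operator L is injective on skew triples: L(O) = 0 gives
   <vert(O), vert(O)> = 0, the metric is definite on the factor components because every unfolding
   G_(i) has full row rank, and U_i O_i = 0 forces O_i = 0 as U_i has orthonormal columns.  This
   yields uniqueness, and existence by a dimension argument. *)

From HB Require Import structures.
From mathcomp Require Import all_boot all_order all_algebra.
From mathcomp Require Import ring lra.
Import Order.TTheory GRing.Theory Num.Theory.
Local Open Scope ring_scope.

Set Implicit Arguments. Unset Strict Implicit. Unset Printing Implicit Defensive.

Section InjectiveEndomorphism.
Variables (F : fieldType) (vT : vectType F) (f : vT -> vT) (f_lin : linear f).
HB.instance Definition _ := GRing.isLinear.Build F vT vT *:%R f f_lin.

Lemma linear_ker0_surj : (forall u, f u = 0 -> u = 0) -> forall v, exists u, f u = v.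
Proof.
move=> f_ker0 v; pose g := linfun f.
have gE : g =1 f by apply: lfunE.
have g_ker0 : lker g == 0%VS.
  apply/lker0P => x y; rewrite !gE => fxy; apply/eqP; rewrite -subr_eq0; apply/eqP/f_ker0.
  by rewrite raddfB /= fxy subrr.
by exists ((g^-1)%VF v); rewrite -gE lker0_lfunVK.
Qed.
End InjectiveEndomorphism.

Section Frobenius.
Variable R : comPzRingType.

Lemma frobC m n (A B : 'M[R]_(m, n)) : frob A B = frob B A.
Proof. by rewrite /frob -mxtrace_tr trmx_mul trmxK. Qed.

Lemma frobDl m n (A B C : 'M[R]_(m, n)) : frob (A + B) C = frob A C + frob B C.
Proof. by rewrite /frob raddfD /= mulmxDl mxtraceD. Qed.

Lemma frobNl m n (A C : 'M[R]_(m, n)) : frob (- A) C = - frob A C.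
Proof. by rewrite /frob raddfN /= mulNmx raddfN. Qed.

Lemma frobBl m n (A B C : 'M[R]_(m, n)) : frob (A - B) C = frob A C - frob B C.
Proof. by rewrite frobDl frobNl. Qed.

Lemma frobZl m n a (A C : 'M[R]_(m, n)) : frob (a *: A) C = a * frob A C.
Proof. by rewrite /frob linearZ /= -scalemxAl mxtraceZ. Qed.

Lemma frob0l m n (C : 'M[R]_(m, n)) : frob 0 C = 0.
Proof. by rewrite /frob trmx0 mul0mx mxtrace0. Qed.

Lemma frob_mulmxl m n p (A : 'M[R]_(m, p)) (B : 'M[R]_(m, n)) (C : 'M[R]_(n, p)) :
  frob A (B *m C) = frob (B^T *m A) C.
Proof. by rewrite /frob trmx_mul trmxK mulmxA. Qed.

Lemma frob_mulmxr m n p (A : 'M[R]_(m, p)) (B : 'M[R]_(m, n)) (C : 'M[R]_(n, p)) :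
  frob A (B *m C) = frob (A *m C^T) B.
Proof. by rewrite /frob trmx_mul trmxK mulmxA mxtrace_mulC mulmxA. Qed.

Lemma frob_mulmx_symr m n (A B : 'M[R]_(m, n)) (S : 'M[R]_n) : S^T = S ->
  frob A (B *m S) = frob B (A *m S).
Proof. by move=> symS; rewrite frob_mulmxr symS frobC. Qed.

Lemma frob_mulmx_syml m n (A B : 'M[R]_(m, n)) (S : 'M[R]_m) : S^T = S ->
  frob A (S *m B) = frob B (S *m A).
Proof. by move=> symS; rewrite frob_mulmxl symS frobC. Qed.

Lemma orthonormal_mulmx_eq0 n r p (U : 'M[R]_(n, r)) (A : 'M[R]_(r, p)) :
  U^T *m U = 1%:M -> U *m A = 0 -> A = 0.
Proof. by move=> UU UA0; rewrite -[A]mul1mx -UU -mulmxA UA0 mulmx0. Qed.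

Lemma frob_gram m n p (w : 'M[R]_(m, n)) (G : 'M[R]_(n, p)) :
  frob w (w *m (G *m G^T)) = frob (w *m G) (w *m G).
Proof. by rewrite mulmxA frob_mulmxr trmxK. Qed.

Lemma frob_trmx_skew n (A B : 'M[R]_n) : skewsym B -> frob A^T B = - frob A B.
Proof.
move=> skB; rewrite /frob trmxK mxtrace_mulC -mxtrace_tr trmx_mul skB.
by rewrite mulmxN raddfN /= mxtrace_mulC.
Qed.

Lemma frob_sum m n (A B : 'M[R]_(m, n)) : frob A B = \sum_i \sum_j A i j * B i j.
Proof.
rewrite /frob /mxtrace exchange_big; apply: eq_bigr => j _; rewrite mxE.
by apply: eq_bigr => i _; rewrite mxE.
Qed.
End Frobenius.

Section FrobeniusReal.
Variable R : realDomainType.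

Lemma frob_ge0 m n (A : 'M[R]_(m, n)) : 0 <= frob A A.
Proof. by rewrite frob_sum !sumr_ge0 // => i _; rewrite sumr_ge0 // => j _; rewrite -expr2 sqr_ge0. Qed.

Lemma frob_eq0 m n (A : 'M[R]_(m, n)) : frob A A = 0 -> A = 0.
Proof.
rewrite frob_sum => /eqP; rewrite psumr_eq0 => [/allP sum0|i _]; last first.
  by rewrite sumr_ge0 // => j _; rewrite -expr2 sqr_ge0.
apply/matrixP => i j; rewrite mxE.
move: (sum0 i (mem_index_enum i)); rewrite psumr_eq0 => [/allP sq0|k _]; last first.
  by rewrite -expr2 sqr_ge0.
by move: (sq0 j (mem_index_enum j)); rewrite mulf_eq0 orbb => /eqP.
Qed.
End FrobeniusReal.

Lemma row_free_mulmx_eq0 (F : fieldType) m n r (G : 'M[F]_(r, m)) (w : 'M[F]_(n, r)) :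
  \rank G = r -> w *m G = 0 -> w = 0.
Proof.
move=> rkG wG0; apply: (@row_free_inj _ _ _ _ G); first by rewrite /row_free rkG.
by rewrite /= wG0 mul0mx.
Qed.

Section SkewSymmetric.
Variables (R : comPzRingType) (n : nat).
Implicit Types A B : 'M[R]_n.

Lemma skewsymD A B : skewsym A -> skewsym B -> skewsym (A + B).
Proof. by rewrite /skewsym linearD /= opprD => -> ->. Qed.

Lemma skewsymB A B : skewsym A -> skewsym B -> skewsym (A - B).
Proof. by rewrite /skewsym linearB /= opprB addrC => -> ->; rewrite opprK. Qed.

Lemma skewsym_conj m (G : 'M[R]_(n, m)) (K : 'M[R]_m) :
  skewsym K -> skewsym (G *m K *m G^T).
Proof. by rewrite /skewsym !trmx_mul trmxK mulmxA => ->; rewrite mulmxN mulNmx. Qed.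
End SkewSymmetric.

Lemma scaler_addrACA (R : pzRingType) (V : lmodType R) a (x y u w : V) :
  (a *: x + y) + (a *: u + w) = a *: (x + u) + (y + w).
Proof. by rewrite scalerDr addrACA. Qed.

Lemma mulmx_linear_mid (R : comPzRingType) m n p q a (A : 'M[R]_(m, n))
  (X Y : 'M[R]_(n, p)) (B : 'M[R]_(p, q)) :
  A *m (a *: X + Y) *m B = a *: (A *m X *m B) + A *m Y *m B.
Proof. by rewrite mulmxDr mulmxDl -scalemxAr -scalemxAl. Qed.

Section SkewPart.
Variables (R : numFieldType) (n : nat).
Implicit Types A B : 'M[R]_n.

Lemma skw_is_linear : linear (@skw R n).
Proof.
move=> a A B; rewrite /skw linearP /= opprD addrACA scalerDr; congr (_ + _).
by rewrite -scalerN -scalerDr !scalerA mulrC.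
Qed.
HB.instance Definition _ := GRing.isLinear.Build R 'M[R]_n 'M[R]_n *:%R (@skw R n) skw_is_linear.

Lemma skw_skew A : skewsym (skw A).
Proof. by rewrite /skewsym /skw linearZ /= linearB /= trmxK -scalerN opprB. Qed.

Lemma skew_add_sym0 A B : skewsym A -> B^T = B -> A + B = 0 -> A = 0 /\ B = 0.
Proof.
move=> skA symB AB0.
have BA0 : B - A = 0 by rewrite -[B]symB -[- A]skA -linearD /= addrC AB0 trmx0.
have : (B - A) + (A + B) = B *+ 2 by rewrite addrA subrK mulr2n.
rewrite BA0 AB0 addr0 -scaler_nat => /esym/eqP; rewrite scaler_eq0 pnatr_eq0 /= => /eqP B0.
by split=> //; move: AB0; rewrite B0 addr0.
Qed.

Lemma skw_sym_eq0 A : skw A = 0 -> A + A^T = 0 -> A = 0.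
Proof.
rewrite /skw => /eqP; rewrite scaler_eq0 invr_eq0 pnatr_eq0 /= subr_eq0 => /eqP AAT AA0.
have : A *+ 2 = 0 by rewrite mulr2n {2}AAT AA0.
by rewrite -scaler_nat => /eqP; rewrite scaler_eq0 pnatr_eq0 => /eqP.
Qed.

Lemma frob_skw A B : skewsym B -> frob (skw A) B = frob A B.
Proof.
move=> skB; rewrite /skw frobZl frobBl frob_trmx_skew // opprK -mulr2n.
by rewrite -[frob A B *+ 2]mulr_natl mulKf // pnatr_eq0.
Qed.
End SkewPart.

Lemma kidx_mxvec_index m n (i : 'I_m) (j : 'I_n) : kidx (mxvec_index i j) = (i, j).
Proof. by rewrite /kidx cast_ordK enum_rankK. Qed.

Lemma big_mxvec_index (V : nmodType) m n (F : 'I_(m * n) -> V) :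
  \sum_q F q = \sum_i \sum_j F (mxvec_index i j).
Proof.
by rewrite pair_big /= (reindex _ (curry_mxvec_bij m n)); apply: eq_big => -[].
Qed.

Section Kronecker.
Variable R : comPzRingType.

Lemma trmx_kron m1 n1 m2 n2 (A : 'M[R]_(m1, n1)) (B : 'M[R]_(m2, n2)) :
  (kron A B)^T = kron A^T B^T.
Proof. by apply/matrixP => i j; rewrite !mxE. Qed.

Lemma kron_linearr m1 n1 m2 n2 (A : 'M[R]_(m1, n1)) : linear (@kron R _ _ m2 n2 A).
Proof. by move=> a B C; apply/matrixP => i j; rewrite !mxE mulrDr mulrCA. Qed.

Lemma kron_linearl m1 n1 m2 n2 (B : 'M[R]_(m2, n2)) : linear (fun A : 'M[R]_(m1, n1) => kron A B).
Proof. by move=> a A C; apply/matrixP => i j; rewrite !mxE mulrDl mulrA. Qed.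

Lemma skewsym_kron1 m p (O : 'M[R]_p) : skewsym O -> skewsym (kron (1%:M : 'M[R]_m) O).
Proof. by rewrite /skewsym trmx_kron trmx1 => ->; apply/matrixP => i j; rewrite !mxE mulrN. Qed.

Lemma skewsym_kronr1 m p (O : 'M[R]_p) : skewsym O -> skewsym (kron O (1%:M : 'M[R]_m)).
Proof. by rewrite /skewsym trmx_kron trmx1 => ->; apply/matrixP => i j; rewrite !mxE mulNr. Qed.

Lemma mulmx_kron1T r m n (M : 'M[R]_(r, m * n)) (B : 'M[R]_n) i q :
  (M *m (kron 1%:M B)^T) i q = \sum_y M i (mxvec_index (kidx q).1 y) * B (kidx q).2 y.
Proof.
rewrite mxE big_mxvec_index (bigD1 (kidx q).1) //= [X in _ + X]big1 ?addr0 => [|x nx].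
  by apply: eq_bigr => y _; rewrite !mxE kidx_mxvec_index /= eqxx mul1r.
by apply: big1 => y _; rewrite !mxE kidx_mxvec_index /= eq_sym (negbTE nx) mul0r mulr0.
Qed.

Lemma mulmx_kronT1 r m n (M : 'M[R]_(r, m * n)) (A : 'M[R]_m) i q :
  (M *m (kron A 1%:M)^T) i q = \sum_x M i (mxvec_index x (kidx q).2) * A (kidx q).1 x.
Proof.
rewrite mxE big_mxvec_index; apply: eq_bigr => x _.
rewrite (bigD1 (kidx q).2) //= big1 ?addr0 => [|y ny].
  by rewrite !mxE kidx_mxvec_index /= eqxx mulr1.
by rewrite !mxE kidx_mxvec_index /= eq_sym (negbTE ny) mulr0 mulr0.
Qed.
End Kronecker.

Section Unfoldings.
Variables (R : comPzRingType) (a b c : nat).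
Implicit Types Y Z G : tensor R a b c.

Lemma tfrobC Y Z : tfrob Y Z = tfrob Z Y.
Proof. by apply: eq_bigr => t _; rewrite mulrC. Qed.

Lemma big_tensor (F : 'I_a * 'I_b * 'I_c -> R) :
  \sum_t F t = \sum_i \sum_j \sum_k F (i, j, k).
Proof. by rewrite pair_bigA pair_bigA; apply: eq_bigr => -[[i j] k]. Qed.

Lemma tfrob_unf1 Y Z : tfrob Y Z = frob (unf1 Y) (unf1 Z).
Proof.
rewrite /tfrob frob_sum big_tensor; apply: eq_bigr => i _.
rewrite big_mxvec_index exchange_big; apply: eq_bigr => j _.
by apply: eq_bigr => k _; rewrite !mxE kidx_mxvec_index.
Qed.

Lemma tfrob_unf2 Y Z : tfrob Y Z = frob (unf2 Y) (unf2 Z).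
Proof.
rewrite /tfrob frob_sum big_tensor exchange_big; apply: eq_bigr => j _.
rewrite big_mxvec_index exchange_big; apply: eq_bigr => i _.
by apply: eq_bigr => k _; rewrite !mxE kidx_mxvec_index.
Qed.

Lemma tfrob_unf3 Y Z : tfrob Y Z = frob (unf3 Y) (unf3 Z).
Proof.
rewrite /tfrob frob_sum big_tensor; symmetry.
under eq_bigr do rewrite big_mxvec_index.
rewrite exchange_big; under eq_bigr do rewrite exchange_big.
rewrite exchange_big; apply: eq_bigr => i _; apply: eq_bigr => j _.
by apply: eq_bigr => k _; rewrite !mxE kidx_mxvec_index.
Qed.

Lemma tfrobDr Y Z Z' : tfrob Y (Z + Z') = tfrob Y Z + tfrob Y Z'.
Proof. by rewrite /tfrob -big_split; apply: eq_bigr => t _; rewrite ffunE mulrDr. Qed.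

Lemma tfrobNr Y Z : tfrob Y (- Z) = - tfrob Y Z.
Proof. by rewrite /tfrob -sumrN; apply: eq_bigr => t _; rewrite ffunE mulrN. Qed.

Lemma unf1_mprod1 G A : unf1 (mprod1 G A) = A *m unf1 G.
Proof. by apply/matrixP => i q; rewrite !mxE ffunE; apply: eq_bigr => l _; rewrite mxE. Qed.

Lemma unf2_mprod2 G A : unf2 (mprod2 G A) = A *m unf2 G.
Proof. by apply/matrixP => i q; rewrite !mxE ffunE; apply: eq_bigr => l _; rewrite mxE. Qed.

Lemma unf3_mprod3 G A : unf3 (mprod3 G A) = A *m unf3 G.
Proof. by apply/matrixP => i q; rewrite !mxE ffunE; apply: eq_bigr => l _; rewrite mxE. Qed.

Lemma unf1_mprod G A1 A2 A3 :
  unf1 (mprod1 G A1 + mprod2 G A2 + mprod3 G A3)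
  = A1 *m unf1 G + unf1 G *m (kron 1%:M A2 + kron A3 1%:M)^T.
Proof.
rewrite linearD /= mulmxDr; apply/matrixP => i q.
rewrite [X in _ = X]mxE [X in _ = _ + X]mxE mulmx_kron1T mulmx_kronT1 !mxE !ffunE /=.
rewrite -addrA; congr (_ + (_ + _)); apply: eq_bigr => l _.
all: by rewrite mxE ?kidx_mxvec_index // mulrC.
Qed.

Lemma unf2_mprod G A1 A2 A3 :
  unf2 (mprod1 G A1 + mprod2 G A2 + mprod3 G A3)
  = A2 *m unf2 G + unf2 G *m (kron 1%:M A1 + kron A3 1%:M)^T.
Proof.
rewrite linearD /= mulmxDr; apply/matrixP => i q.
rewrite [X in _ = X]mxE [X in _ = _ + X]mxE mulmx_kron1T mulmx_kronT1 !mxE !ffunE /=.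
rewrite addrCA -addrA; congr (_ + (_ + _)); apply: eq_bigr => l _.
all: by rewrite mxE ?kidx_mxvec_index // mulrC.
Qed.

Lemma unf3_mprod G A1 A2 A3 :
  unf3 (mprod1 G A1 + mprod2 G A2 + mprod3 G A3)
  = A3 *m unf3 G + unf3 G *m (kron 1%:M A1 + kron A2 1%:M)^T.
Proof.
rewrite linearD /= mulmxDr; apply/matrixP => i q.
rewrite [X in _ = X]mxE [X in _ = _ + X]mxE mulmx_kron1T mulmx_kronT1 !mxE !ffunE /=.
rewrite [X in X = _]addrC; congr (_ + (_ + _)); apply: eq_bigr => l _.
all: by rewrite mxE ?kidx_mxvec_index // mulrC.
Qed.

Lemma tfrob_mprod1 Y G A : tfrob Y (mprod1 G A) = frob (unf1 Y *m (unf1 G)^T) A.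
Proof. by rewrite tfrob_unf1 unf1_mprod1 frob_mulmxr. Qed.

Lemma tfrob_mprod2 Y G A : tfrob Y (mprod2 G A) = frob (unf2 Y *m (unf2 G)^T) A.
Proof. by rewrite tfrob_unf2 unf2_mprod2 frob_mulmxr. Qed.

Lemma tfrob_mprod3 Y G A : tfrob Y (mprod3 G A) = frob (unf3 Y *m (unf3 G)^T) A.
Proof. by rewrite tfrob_unf3 unf3_mprod3 frob_mulmxr. Qed.
End Unfoldings.

Section ModeEquation.
Variables (R : numFieldType) (n r k m : nat).
Variables (Gi : 'M[R]_(r, m)) (U : 'M[R]_(n, r)) (P : 'M[R]_(n, k)) (Na : R).

Definition mode_lhs (Om : 'M[R]_r) (K : 'M[R]_m) : 'M[R]_r :=
  let V := P *m P^T *m U in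
  let W := U - V in
  let Gs := Gi *m Gi^T in
  let Ga := Na%:M + Gs in
  skw (V^T *m V *m Om *m Gs) + skw (Gs *m Om) + skw (W^T *m W *m Om *m Ga)
    - Gi *m K *m Gi^T.

Definition mode_rhs (eta : 'M[R]_(n, r)) (EG : 'M[R]_(r, m)) : 'M[R]_r :=
  let V := P *m P^T *m U in
  let W := U - V in
  let Gs := Gi *m Gi^T in
  let Ga := Na%:M + Gs in
  skw (V^T *m eta *m Gs + W^T *m eta *m Ga + Gi *m EG^T).

Lemma trmx_gram : (Gi *m Gi^T)^T = Gi *m Gi^T.
Proof. by rewrite trmx_mul trmxK. Qed.

Lemma trmx_compl_proj : (1%:M - P *m P^T)^T = 1%:M - P *m P^T.
Proof. by rewrite linearB /= trmx1 trmx_mul trmxK. Qed.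

Lemma compl_proj_idem : P^T *m P = 1%:M ->
  (1%:M - P *m P^T) *m (1%:M - P *m P^T) = 1%:M - P *m P^T.
Proof. by move=> PP; rewrite mulmxBl mul1mx mulmxBr mulmx1 !mulmxA -(mulmxA P) PP mulmx1 subrr subr0. Qed.

Lemma frob_compl_proj p (w : 'M[R]_(n, p)) : P^T *m P = 1%:M ->
  frob w ((1%:M - P *m P^T) *m w)
  = frob ((1%:M - P *m P^T) *m w) ((1%:M - P *m P^T) *m w).
Proof. by move=> PP; rewrite -{1}(compl_proj_idem PP) -mulmxA frob_mulmxl trmx_compl_proj. Qed.

Lemma mode_rhs_pairing eta EG Th : skewsym Th ->
  frob (mode_rhs eta EG) Th
  = frob eta (U *m Th *m (Gi *m Gi^T))
    + Na * frob eta ((1%:M - P *m P^T) *m (U *m Th)) - frob (EG *m Gi^T) Th.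
Proof.
move=> skTh; rewrite /mode_rhs frob_skw //.
have GsT := trmx_gram; have QT := trmx_compl_proj.
set Gs := Gi *m Gi^T in GsT *; set Q := 1%:M - P *m P^T in QT *.
have -> : P *m P^T *m U = U - Q *m U by rewrite mulmxBl mul1mx opprB addrC subrK.
clearbody Gs Q; rewrite subKr (frob_mulmxr eta (U *m Th)) frob_mulmxl GsT.
rewrite (mulmxA Q) frob_mulmxl linearB /= !trmx_mul QT.
rewrite -[Gi *m EG^T]trmxK trmx_mul trmxK !mulmxBl mulmxDr mul_mx_scalar.
rewrite !frobDl frobNl frobZl frob_trmx_skew // -!mulmxA.
ring.
Qed.

Lemma mode_lhs_pairing Om Th K : P^T *m P = 1%:M ->
  skewsym Om -> skewsym Th -> skewsym K ->
  frob (mode_lhs Om K) Th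
  = frob (U *m Om) (U *m Th *m (Gi *m Gi^T))
    + Na * frob (U *m Om) ((1%:M - P *m P^T) *m (U *m Th))
    + frob ((Om *m Gi + Gi *m K^T) *m Gi^T) Th.
Proof.
move=> PP skOm skTh skK; rewrite /mode_lhs (mulmxDl (Om *m Gi)) -(mulmxA Om) skK mulmxN mulNmx.
have QQ := compl_proj_idem PP; have GsT := trmx_gram; have QT := trmx_compl_proj.
set Gs := Gi *m Gi^T in GsT *; set Q := 1%:M - P *m P^T in QQ QT *.
have -> : P *m P^T *m U = U - Q *m U by rewrite mulmxBl mul1mx opprB addrC subrK.
clearbody Gs Q; rewrite subKr.
have WW : (Q *m U)^T *m (Q *m U) = U^T *m Q *m U.
  by rewrite trmx_mul QT !mulmxA -(mulmxA U^T Q Q) QQ.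
have VV : (U - Q *m U)^T *m (U - Q *m U) = U^T *m U - U^T *m Q *m U.
  have -> : (U - Q *m U)^T = U^T - U^T *m Q by rewrite linearB /= trmx_mul QT.
  by rewrite mulmxBl !mulmxBr !mulmxA -(mulmxA U^T Q Q) QQ subrr subr0.
have GsOm : frob (Gs *m Om) Th = frob (Om *m Gs) Th.
  by rewrite -[Gs *m Om]trmxK frob_trmx_skew // trmx_mul GsT skOm mulNmx frobNl opprK.
rewrite VV WW frobBl !frobDl !frob_skw // GsOm.
rewrite (frob_mulmxr (U *m Om) (U *m Th)) frob_mulmxl GsT (mulmxA Q) frob_mulmxl trmx_mul QT.
rewrite !mulmxBl mulmxDr mul_mx_scalar !frobDl !frobNl frobZl -!mulmxA.
ring.
Qed.

Lemma mode_lhs_linear a Om Om' K K' :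
  mode_lhs (a *: Om + Om') (a *: K + K') = a *: mode_lhs Om K + mode_lhs Om' K'.
Proof.
rewrite /mode_lhs !mulmx_linear_mid (mulmxDr (Gi *m Gi^T)) -scalemxAr !linearP /=.
by rewrite !scaler_addrACA.
Qed.

Lemma mode_lhs_skew Om K : skewsym K -> skewsym (mode_lhs Om K).
Proof.
move=> skK; apply: skewsymB; last exact: skewsym_conj.
by do 2?apply: skewsymD; apply: skw_skew.
Qed.
End ModeEquation.

Section HorizontalProjection.
Variable R : realFieldType.
Variables n1 n2 n3 r1 r2 r3 k1 k2 k3 : nat.
Variables (P1 : 'M[R]_(n1, k1)) (P2 : 'M[R]_(n2, k2)) (P3 : 'M[R]_(n3, k3)).
Variables alpha1 alpha2 alpha3 : R.
Local Notation quad := (quad R n1 n2 n3 r1 r2 r3).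
Local Notation N := (NN R n1 n2 n3).
Local Notation metric := (metric P1 P2 P3 alpha1 alpha2 alpha3).
Local Notation horizontal := (horizontal P1 P2 P3 alpha1 alpha2 alpha3).

Local Notation omegas := ('M[R]_r1 * 'M[R]_r2 * 'M[R]_r3)%type.
Implicit Types (X eta : quad) (O T : omegas).

Definition skewsym3 O := [/\ skewsym O.1.1, skewsym O.1.2 & skewsym O.2].

Definition ofrob (A B : omegas) : R := frob A.1.1 B.1.1 + frob A.1.2 B.1.2 + frob A.2 B.2.

Definition vert X O : quad :=
  Quad (- (mprod1 (qG X) O.1.1 + mprod2 (qG X) O.1.2 + mprod3 (qG X) O.2))
       (q1 X *m O.1.1) (q2 X *m O.1.2) (q3 X *m O.2).

Definition sys_lhs X O : omegas :=
  (mode_lhs (unf1 (qG X)) (q1 X) P1 (N * alpha1) O.1.1 (kron 1%:M O.1.2 + kron O.2 1%:M),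
   mode_lhs (unf2 (qG X)) (q2 X) P2 (N * alpha2) O.1.2 (kron 1%:M O.1.1 + kron O.2 1%:M),
   mode_lhs (unf3 (qG X)) (q3 X) P3 (N * alpha3) O.2 (kron 1%:M O.1.1 + kron O.1.2 1%:M)).

Definition sys_rhs X eta : omegas :=
  (mode_rhs (unf1 (qG X)) (q1 X) P1 (N * alpha1) (q1 eta) (unf1 (qG eta)),
   mode_rhs (unf2 (qG X)) (q2 X) P2 (N * alpha2) (q2 eta) (unf2 (qG eta)),
   mode_rhs (unf3 (qG X)) (q3 X) P3 (N * alpha3) (q3 eta) (unf3 (qG eta))).

Hypotheses (hP1 : P1^T *m P1 = 1%:M) (hP2 : P2^T *m P2 = 1%:M) (hP3 : P3^T *m P3 = 1%:M).
Hypotheses (ha1 : 0 < alpha1) (ha2 : 0 < alpha2) (ha3 : 0 < alpha3).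

Lemma horiz_systemE X eta (O1 : 'M[R]_r1) (O2 : 'M[R]_r2) (O3 : 'M[R]_r3) :
  horiz_system P1 P2 P3 alpha1 alpha2 alpha3 X eta O1 O2 O3 <->
  sys_lhs X (O1, O2, O3) = sys_rhs X eta.
Proof. by split=> [[e1 e2 e3] | [e1 e2 e3]]; [congr (_, _, _) | split]. Qed.

Lemma metric_vert_r X eta T : skewsym3 T ->
  metric X eta (vert X T) = ofrob (sys_rhs X eta) T.
Proof.
case=> sk1 sk2 sk3; rewrite /metric /ofrob /= tfrobNr !tfrobDr.
rewrite (tfrob_mprod1 (qG eta)) (tfrob_mprod2 (qG eta)) (tfrob_mprod3 (qG eta)).
rewrite !mode_rhs_pairing //.
ring.
Qed.

Lemma metric_vert X O T : skewsym3 O -> skewsym3 T ->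
  metric X (vert X O) (vert X T) = ofrob (sys_lhs X O) T.
Proof.
move=> [o1 o2 o3] [t1 t2 t3].
rewrite /metric /ofrob /= tfrobNr tfrobC tfrobNr opprK tfrobC !tfrobDr.
set Y := mprod1 _ O.1.1 + _ + _.
rewrite (tfrob_mprod1 Y) (tfrob_mprod2 Y) (tfrob_mprod3 Y).
rewrite unf1_mprod unf2_mprod unf3_mprod !mode_lhs_pairing //;
  try by apply: skewsymD; [apply: skewsym_kron1 | apply: skewsym_kronr1].
ring.
Qed.

Lemma metric_subl X a b c : metric X (qsub a b) c = metric X a c - metric X b c.
Proof.
rewrite /metric /= !frobBl tfrobC tfrobDr tfrobNr.
rewrite [tfrob (qG c) (qG a)]tfrobC [tfrob (qG c) (qG b)]tfrobC.
ring.
Qed.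

Lemma metric_sym X a b : metric X a b = metric X b a.
Proof.
rewrite /metric tfrobC.
by rewrite (frob_mulmx_symr (q1 a)) ?(frob_mulmx_symr (q2 a)) ?(frob_mulmx_symr (q3 a))
  ?(frob_mulmx_syml (q1 a)) ?(frob_mulmx_syml (q2 a)) ?(frob_mulmx_syml (q3 a))
  ?trmx_gram ?trmx_compl_proj.
Qed.

Lemma metric_self_eq0 X w : in_Mr X -> metric X w w = 0 -> [/\ q1 w = 0, q2 w = 0 & q3 w = 0].
Proof.
move=> [[rk1 rk2 rk3] _].
rewrite /metric !frob_gram !frob_compl_proj // tfrob_unf1 => w0.
have N_ge0 : 0 <= N by rewrite ler0n.
have := frob_ge0 (q1 w *m unf1 (qG X)); have := frob_ge0 (q2 w *m unf2 (qG X)).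
have := frob_ge0 (q3 w *m unf3 (qG X)); have := frob_ge0 (unf1 (qG w)).
have := mulr_ge0 (mulr_ge0 N_ge0 (ltW ha1)) (frob_ge0 ((1%:M - P1 *m P1^T) *m q1 w)).
have := mulr_ge0 (mulr_ge0 N_ge0 (ltW ha2)) (frob_ge0 ((1%:M - P2 *m P2^T) *m q2 w)).
have := mulr_ge0 (mulr_ge0 N_ge0 (ltW ha3)) (frob_ge0 ((1%:M - P3 *m P3^T) *m q3 w)).
move=> *; split; apply: row_free_mulmx_eq0; [exact: rk1 | | exact: rk2 | | exact: rk3 |].
all: by apply: frob_eq0; lra.
Qed.

Lemma ofrob_eq0 A : ofrob A A = 0 -> A = 0.
Proof.
case: A => [[A1 A2] A3]; rewrite /ofrob /= => A0.
have := frob_ge0 A1; have := frob_ge0 A2; have := frob_ge0 A3 => *.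
by congr (_, _, _); apply: frob_eq0; lra.
Qed.

Lemma ofrobBl A B C : ofrob (A - B) C = ofrob A C - ofrob B C.
Proof. by rewrite /ofrob /= !frobBl; ring. Qed.

Lemma skewsym3B O T : skewsym3 O -> skewsym3 T -> skewsym3 (O - T).
Proof. by case=> ? ? ? [? ? ?]; split; apply: skewsymB. Qed.

Lemma sys_lhs_skew X O : skewsym3 O -> skewsym3 (sys_lhs X O).
Proof.
by case=> o1 o2 o3; split; apply: mode_lhs_skew; apply: skewsymD;
  apply: skewsym_kron1 || apply: skewsym_kronr1.
Qed.

Lemma sys_rhs_skew X eta : skewsym3 (sys_rhs X eta).
Proof. by split; apply: skw_skew. Qed.

Lemma sys_lhs_linear X : linear (sys_lhs X).
Proof.
move=> a O T; rewrite /sys_lhs /= !kron_linearr !kron_linearl !scaler_addrACA.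
by rewrite !mode_lhs_linear.
Qed.
HB.instance Definition _ X :=
  GRing.isLinear.Build R omegas omegas *:%R (sys_lhs X) (sys_lhs_linear X).

Lemma is_horiz_proj_sub_vert X eta v : vertical X v -> horizontal X (qsub eta v) ->
  is_horiz_proj P1 P2 P3 alpha1 alpha2 alpha3 X eta (qsub eta v).
Proof.
move=> vert_v horiz_ev; split=> // xi [_ orth].
have -> : qsub eta (qsub eta v) = v by case: v {vert_v horiz_ev} => *; rewrite /qsub /= !subKr.
by rewrite metric_sym orth.
Qed.

Lemma sys_lhs_inj X O : in_Mr X -> skewsym3 O -> sys_lhs X O = 0 -> O = 0.
Proof.
move=> hX skO O0; have [_ [U1 U2 U3]] := hX.
have := metric_vert X skO skO; rewrite O0 /ofrob /= !frob0l !addr0.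
case/(metric_self_eq0 hX) => /= UO1 UO2 UO3.
case: O {skO O0} UO1 UO2 UO3 => [[O1 O2] O3] /= UO1 UO2 UO3.
by congr (_, _, _); apply: orthonormal_mulmx_eq0; eassumption.
Qed.

Lemma tangent_sub_vert X eta O : in_Mr X -> skewsym3 O -> tangent X eta ->
  tangent X (qsub eta (vert X O)).
Proof.
have sub_skew n r (U E : 'M[R]_(n, r)) (Om : 'M[R]_r) : U^T *m U = 1%:M -> skewsym Om ->
    U^T *m E + E^T *m U = 0 -> U^T *m (E - U *m Om) + (E - U *m Om)^T *m U = 0.
  move=> UU skOm UE; rewrite mulmxBr linearB /= trmx_mul mulmxBl mulmxA UU mul1mx.
  by rewrite -mulmxA UU mulmx1 skOm opprK addrACA UE add0r addNr.
move=> [_ [U1 U2 U3]] [o1 o2 o3] [e1 e2 e3].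
by split; apply: sub_skew.
Qed.

Lemma horizontal_sub_vertE X eta O : in_Mr X -> tangent X eta -> skewsym3 O ->
  horizontal X (qsub eta (vert X O)) <-> sys_lhs X O = sys_rhs X eta.
Proof.
move=> hX heta skO.
have pairing T : skewsym3 T ->
    metric X (qsub eta (vert X O)) (vert X T) = ofrob (sys_rhs X eta - sys_lhs X O) T.
  by move=> skT; rewrite metric_subl metric_vert_r // metric_vert // ofrobBl.
split=> [[_ orth] | sol].
- have skD := skewsym3B (sys_rhs_skew X eta) (sys_lhs_skew X skO).
  apply/esym/eqP; rewrite -subr_eq0; apply/eqP/ofrob_eq0; rewrite -pairing //.
  set D := sys_rhs X eta - sys_lhs X O in skD *.
  by apply: orth; case: skD => ? ? ?; exists D.1.1, D.1.2, D.2.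
- split; first exact: tangent_sub_vert.
  move=> _ [T1 [T2 [T3 [t1 t2 t3 ->]]]].
  by rewrite (pairing (T1, T2, T3)) // sol subrr /ofrob /= !frob0l !addr0.
Qed.

(* On all triples, x |-> L(skw x) + (x + x^T) is injective (its skew and symmetric parts cannot
   cancel), hence onto; the skew part of a preimage of the right-hand side solves the system. *)
Lemma sys_solvable X eta : in_Mr X -> exists O, skewsym3 O /\ sys_lhs X O = sys_rhs X eta.
Proof.
move=> hX.
pose skw3 (x : omegas) : omegas := (skw x.1.1, skw x.1.2, skw x.2).
pose sym3 (x : omegas) : omegas := (x.1.1 + x.1.1^T, x.1.2 + x.1.2^T, x.2 + x.2^T).
have skw3_skew x : skewsym3 (skw3 x) by split; apply: skw_skew.
have sym_skew_eq0 A x : skewsym3 A -> A + sym3 x = 0 -> A = 0 /\ sym3 x = 0.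
  have symT m (y : 'M[R]_m) : (y + y^T)^T = y + y^T by rewrite linearD /= trmxK addrC.
  case: A => [[A1 A2] A3] [/= s1 s2 s3] [e1 e2 e3].
  have [a1 b1] := skew_add_sym0 s1 (symT _ _) e1.
  have [a2 b2] := skew_add_sym0 s2 (symT _ _) e2.
  have [a3 b3] := skew_add_sym0 s3 (symT _ _) e3.
  by rewrite a1 a2 a3 /sym3 b1 b2 b3.
pose F x := sys_lhs X (skw3 x) + sym3 x.
have F_lin : linear F.
  move=> a x y; rewrite /F.
  have -> : skw3 (a *: x + y) = a *: skw3 x + skw3 y by rewrite /skw3 /= !linearP.
  have -> : sym3 (a *: x + y) = a *: sym3 x + sym3 y.
    by rewrite /sym3 /= !linearP /= !scaler_addrACA.
  by rewrite sys_lhs_linear scaler_addrACA.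
have F_ker0 x : F x = 0 -> x = 0.
  case/(sym_skew_eq0 _ _ (sys_lhs_skew X (skw3_skew x))) => /sys_lhs_inj.
  case: x => [[x1 x2] x3] /(_ hX (skw3_skew _)) [/= z1 z2 z3] [s1 s2 s3].
  by congr (_, _, _); apply: skw_sym_eq0.
have [x Fx] := linear_ker0_surj F_lin F_ker0 (sys_rhs X eta); rewrite /F in Fx.
exists (skw3 x); split => //; apply/eqP; rewrite -subr_eq0; apply/eqP.
have skD := skewsym3B (sys_lhs_skew X (skw3_skew x)) (sys_rhs_skew X eta).
by case: (sym_skew_eq0 _ x skD); rewrite // addrAC Fx subrr.
Qed.

Lemma sys_unique X eta O T : in_Mr X -> skewsym3 O -> skewsym3 T ->
  sys_lhs X O = sys_rhs X eta -> sys_lhs X T = sys_rhs X eta -> T = O.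
Proof.
move=> hX skO skT solO solT; apply/eqP; rewrite -subr_eq0; apply/eqP.
by apply: (sys_lhs_inj hX (skewsym3B skT skO)); rewrite linearB /= solO solT subrr.
Qed.
End HorizontalProjection.

Theorem proposition7 (R : realFieldType) (n1 n2 n3 r1 r2 r3 k1 k2 k3 : nat)
  (hr1 : (1 <= r1 <= n1)%N) (hr2 : (1 <= r2 <= n2)%N) (hr3 : (1 <= r3 <= n3)%N)
  (hk1 : (r1 <= k1)%N) (hk2 : (r2 <= k2)%N) (hk3 : (r3 <= k3)%N)
  (alpha1 alpha2 alpha3 : R)
  (ha1 : 0 < alpha1) (ha2 : 0 < alpha2) (ha3 : 0 < alpha3)
  (P1 : 'M[R]_(n1, k1)) (P2 : 'M[R]_(n2, k2)) (P3 : 'M[R]_(n3, k3))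
  (hP1 : P1^T *m P1 = 1%:M) (hP2 : P2^T *m P2 = 1%:M) (hP3 : P3^T *m P3 = 1%:M)
  (X eta : quad R n1 n2 n3 r1 r2 r3)
  (hX : in_Mr X) (heta : tangent X eta) :
  exists (O1 : 'M[R]_r1) (O2 : 'M[R]_r2) (O3 : 'M[R]_r3),
    [/\ skewsym O1, skewsym O2, skewsym O3
       & horiz_system P1 P2 P3 alpha1 alpha2 alpha3 X eta O1 O2 O3] /\
        (forall (O1' : 'M[R]_r1) (O2' : 'M[R]_r2) (O3' : 'M[R]_r3),
            skewsym O1' -> skewsym O2' -> skewsym O3' ->
            horiz_system P1 P2 P3 alpha1 alpha2 alpha3 X eta O1' O2' O3' ->
            [/\ O1' = O1, O2' = O2 & O3' = O3]) /\
        is_horiz_proj P1 P2 P3 alpha1 alpha2 alpha3 X eta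
          (Quad (qG eta + (mprod1 (qG X) O1 + mprod2 (qG X) O2 + mprod3 (qG X) O3))
                (q1 eta - q1 X *m O1) (q2 eta - q2 X *m O2)
                (q3 eta - q3 X *m O3)).
Proof.
have [[[O1 O2] O3] [skO solO]] := sys_solvable hP1 hP2 hP3 ha1 ha2 ha3 eta hX.
have [sk1 sk2 sk3] := skO.
exists O1, O2, O3; split; [by split=> //; apply/horiz_systemE | split].
- move=> O1' O2' O3' sk1' sk2' sk3' /horiz_systemE solO'.
  have skO' : skewsym3 (O1', O2', O3') by [].
  by case: (sys_unique hP1 hP2 hP3 ha1 ha2 ha3 hX skO skO' solO solO') => -> -> ->.
- have -> : Quad (qG eta + (mprod1 (qG X) O1 + mprod2 (qG X) O2 + mprod3 (qG X) O3))
      (q1 eta - q1 X *m O1) (q2 eta - q2 X *m O2) (q3 eta - q3 X *m O3)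
    = qsub eta (vert X (O1, O2, O3)) by rewrite /qsub /= opprK.
  apply: is_horiz_proj_sub_vert; first by exists O1, O2, O3.
  exact/(horizontal_sub_vertE _ _ _ hP1 hP2 hP3 hX heta skO).
Qed.
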